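(* Let $n\ge 2$, $c\ge 1$, $\Delta>0$, and let $V'$ be a family of at most $n$ vectors in $\mathbb{R}^d$, each of Euclidean length in $[n^{-2},2\sqrt n]$, such that every vertex has expected degree at most $c$ in $G\sim\mathcal{G}_{V'}$ and the expected number of triangles in $G\sim\mathcal{G}_{V'}$ is at least $\Delta n/2$. For each integer $r$ let $V_r=\{\vec v\in V': \|\vec v\|_2\in[2^r,2^{r+1})\}$, let $R=\{r: |V_r|\ge (\Delta/60c^2)(n/\lg n)\}$, and let $V''=\bigcup_{r\in R}V_r$. Then the expected number of triangles in $G\sim\mathcal{G}_{V''}$ is at least $\Delta n/8$.
   Context: For a finite family of vectors $W=(\vec w_i)_{i\in I}$ in $\mathbb{R}^d$, $\mathcal{G}_W$ is the distribution on simple undirected graphs with vertex set $I$ in which, independently for each unordered pair $\{i,j\}$ with $i\neq j$, the edge $(i,j)$ is present with probability $\max(0,\min(\vec w_i\cdot\vec w_j,1))$. The expected degree of $i$ is $\sum_{j\ne i}\max(0,\min(\vec w_i\cdot\vec w_j,1))$. A triangle is a set of three distinct pairwise adjacent vertices. $\lg$ is the base-2 logarithm. *)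

From Stdlib Require Import Reals Lra ClassicalEpsilon.
Open Scope R_scope.

Fixpoint sumR (m : nat) (f : nat -> R) : R :=
  match m with
  | O => 0
  | S k => sumR k f + f k
  end.

Definition indic (P : Prop) : R :=
  if excluded_middle_informative P then 1 else 0.

(* A vector of R^d is represented by its coordinate function (coordinates 0..d-1). *)
Definition dot (d : nat) (u v : nat -> R) : R := sumR d (fun k => u k * v k).
Definition norm2 (d : nat) (u : nat -> R) : R := sqrt (dot d u u).

Definition lg (x : R) : R := ln x / ln 2.

Definition edge_prob (d : nat) (W : nat -> nat -> R) (i j : nat) : R :=
  Rmax 0 (Rmin (dot d (W i) (W j)) 1).

Definition exp_degree (d m : nat) (W : nat -> nat -> R) (i : nat) : R :=
  sumR m (fun j => indic (j <> i) * edge_prob d W i j).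

(* Expected number of triangles in G ~ G_{(W i)_{i < m, S i}}, where S selects
   the sub-family (vertex set {i < m | S i}).  By independence of the edges,
   this is the sum over 3-sets {i<j<k} of the product of the three edge
   probabilities. *)
Definition exp_triangles (d m : nat) (W : nat -> nat -> R) (S : nat -> Prop) : R :=
  sumR m (fun i => sumR m (fun j => sumR m (fun k =>
    indic ((i < j)%nat /\ (j < k)%nat /\ S i /\ S j /\ S k) *
    (edge_prob d W i j * edge_prob d W j k * edge_prob d W i k)))).

Definition in_bucket (d : nat) (W : nat -> nat -> R) (r : Z) (i : nat) : Prop :=
  powerRZ 2 r <= norm2 d (W i) < powerRZ 2 (r + 1).

(* |V_r| (counted as a sub-family, i.e. with multiplicity of indices) *)
Definition bucket_size (d m : nat) (W : nat -> nat -> R) (r : Z) : R :=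
  sumR m (fun i => indic (in_bucket d W r i)).

(* Deleting a vertex v destroys at most deg(v)^2 <= c^2 expected triangles,
   since a triangle through v is determined by its two edges at v; charging
   each lost triangle to each of its deleted corners costs a factor 3.  The
   vertices outside V'' lie in sparse buckets, and as all norms lie in
   [n^-2, 2 sqrt n] there are at most 3 lg n + 4 <= 7 lg n buckets, each with
   fewer than (Delta / 60 c^2)(n / lg n) vertices.  So the loss is at most
   3 c^2 * 7 Delta n / (60 c^2) = 21 Delta n / 60 < 3 Delta n / 8. *)
From Stdlib Require Import Reals Lra Lia ZArith Classical ClassicalEpsilon.
Open Scope R_scope.

Lemma sumR_ext m f g : (forall i, (i < m)%nat -> f i = g i) -> sumR m f = sumR m g.
Proof.
  induction m as [|m IH]; intros H; simpl; [reflexivity|].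
  rewrite IH by (intros; apply H; lia).
  rewrite H by lia; reflexivity.
Qed.

Lemma sumR_le m f g : (forall i, (i < m)%nat -> f i <= g i) -> sumR m f <= sumR m g.
Proof.
  induction m as [|m IH]; intros H; simpl; [lra|].
  assert (sumR m f <= sumR m g) by (apply IH; intros; apply H; lia).
  assert (f m <= g m) by (apply H; lia).
  lra.
Qed.

Lemma sumR_plus m f g : sumR m (fun i => f i + g i) = sumR m f + sumR m g.
Proof. induction m as [|m IH]; simpl; [lra | rewrite IH; lra]. Qed.

Lemma sumR_minus m f g : sumR m (fun i => f i - g i) = sumR m f - sumR m g.
Proof. induction m as [|m IH]; simpl; [lra | rewrite IH; lra]. Qed.

Lemma sumR_mult_l m a f : sumR m (fun i => a * f i) = a * sumR m f.
Proof. induction m as [|m IH]; simpl; [ring | rewrite IH; ring]. Qed.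

Lemma sumR_const m a : sumR m (fun _ => a) = INR m * a.
Proof. induction m as [|m IH]; simpl sumR; [simpl; ring | rewrite IH, S_INR; ring]. Qed.

Lemma sumR_swap a b (f : nat -> nat -> R) :
  sumR a (fun i => sumR b (f i)) = sumR b (fun j => sumR a (fun i => f i j)).
Proof.
  induction a as [|a IH]; simpl.
  - rewrite sumR_const; ring.
  - rewrite IH, <- sumR_plus; reflexivity.
Qed.

Lemma sumR_nonneg m f : (forall i, (i < m)%nat -> 0 <= f i) -> 0 <= sumR m f.
Proof. intros H; rewrite <- (Rmult_0_r (INR m)), <- sumR_const; apply sumR_le, H. Qed.

Lemma sumR_term_le m f t :
  (forall i, (i < m)%nat -> 0 <= f i) -> (t < m)%nat -> f t <= sumR m f.
Proof.
  induction m as [|m IH]; intros H Ht; [lia|]; simpl.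
  assert (0 <= f m) by (apply H; lia).
  destruct (Nat.eq_dec t m) as [->|].
  - assert (0 <= sumR m f) by (apply sumR_nonneg; intros; apply H; lia); lra.
  - assert (f t <= sumR m f) by (apply IH; [intros; apply H|]; lia); lra.
Qed.

Lemma sumR_weighted_sq_le m w f c :
  (forall i, (i < m)%nat -> 0 <= w i /\ 0 <= f i <= c) ->
  sumR m (fun i => w i * f i ^ 2) <= c ^ 2 * sumR m w.
Proof.
  intros H; rewrite <- sumR_mult_l; apply sumR_le; intros i Hi.
  destruct (H i Hi) as [Hw Hf].
  assert (f i ^ 2 <= c ^ 2) by (apply pow_incr; lra).
  nra.
Qed.

Lemma indic_true (P : Prop) : P -> indic P = 1.
Proof. intros H; unfold indic; destruct (excluded_middle_informative P); tauto. Qed.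

Lemma indic_false (P : Prop) : ~ P -> indic P = 0.
Proof. intros H; unfold indic; destruct (excluded_middle_informative P); tauto. Qed.

Lemma indic_bounds (P : Prop) : 0 <= indic P <= 1.
Proof. unfold indic; destruct (excluded_middle_informative P); lra. Qed.

Ltac simpl_indic :=
  repeat match goal with |- context [indic ?P] =>
    first [ rewrite (indic_true P) by (tauto || lia)
          | rewrite (indic_false P) by (tauto || lia) ] end.

Lemma edge_prob_bounds d W i j : 0 <= edge_prob d W i j <= 1.
Proof.
  unfold edge_prob; split; [apply Rmax_l|].
  apply Rmax_lub; [lra | apply Rmin_r].
Qed.

Lemma edge_prob_sym d W i j : edge_prob d W i j = edge_prob d W j i.
Proof. unfold edge_prob, dot; do 2 f_equal; apply sumR_ext; intros; ring. Qed.

Lemma exp_degree_nonneg d m W i : 0 <= exp_degree d m W i.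
Proof.
  apply sumR_nonneg; intros j _.
  apply Rmult_le_pos; [apply indic_bounds | apply edge_prob_bounds].
Qed.

Definition sum3 m (F : nat -> nat -> nat -> R) : R :=
  sumR m (fun i => sumR m (fun j => sumR m (fun k => F i j k))).

Lemma sum3_le m F G :
  (forall i j k, F i j k <= G i j k) -> sum3 m F <= sum3 m G.
Proof. intros H; do 3 (apply sumR_le; intros ? _); apply H. Qed.

Lemma sum3_minus m F G :
  sum3 m (fun i j k => F i j k - G i j k) = sum3 m F - sum3 m G.
Proof.
  unfold sum3; rewrite <- sumR_minus; apply sumR_ext; intros i _.
  rewrite <- sumR_minus; apply sumR_ext; intros j _.
  apply sumR_minus.
Qed.

Lemma sum3_plus m F G :
  sum3 m (fun i j k => F i j k + G i j k) = sum3 m F + sum3 m G.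
Proof.
  unfold sum3; rewrite <- sumR_plus; apply sumR_ext; intros i _.
  rewrite <- sumR_plus; apply sumR_ext; intros j _.
  apply sumR_plus.
Qed.

Lemma sum3_swap12 m F : sum3 m (fun i j k => F j i k) = sum3 m F.
Proof. apply sumR_swap. Qed.

Lemma sum3_swap23 m F : sum3 m (fun i j k => F i k j) = sum3 m F.
Proof. apply sumR_ext; intros i _; apply sumR_swap. Qed.

Lemma sum3_cherries m (u : nat -> R) (a : nat -> nat -> R) :
  sum3 m (fun i j k => u i * (a i j * a i k)) = sumR m (fun i => u i * sumR m (a i) ^ 2).
Proof.
  apply sumR_ext; intros i _.
  transitivity (sumR m (fun j => (u i * a i j) * sumR m (a i))).
  - apply sumR_ext; intros j _.
    rewrite <- sumR_mult_l; apply sumR_ext; intros k _; ring.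
  - rewrite (sumR_ext m _ (fun j => (u i * sumR m (a i)) * a i j)) by (intros; ring).
    rewrite sumR_mult_l; ring.
Qed.

Lemma triangle_loss_le (V : nat -> Prop) (p : nat -> nat -> R) i j k :
  (forall x y, 0 <= p x y <= 1) -> (forall x y, p x y = p y x) ->
  indic ((i < j)%nat /\ (j < k)%nat /\ True /\ True /\ True) * (p i j * p j k * p i k)
  - indic ((i < j)%nat /\ (j < k)%nat /\ V i /\ V j /\ V k) * (p i j * p j k * p i k)
  <= indic (~ V i) * ((indic (j <> i) * p i j) * (indic (k <> i) * p i k))
   + indic (~ V j) * ((indic (i <> j) * p j i) * (indic (k <> j) * p j k))
   + indic (~ V k) * ((indic (i <> k) * p k i) * (indic (j <> k) * p k j)).
Proof.
  intros p_bounds p_sym.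
  rewrite (p_sym j i), (p_sym k i), (p_sym k j).
  pose proof (p_bounds i j); pose proof (p_bounds j k); pose proof (p_bounds i k).
  set (A := p i j) in *; set (B := p j k) in *; set (C := p i k) in *.
  assert (0 <= A * B /\ 0 <= A * C /\ 0 <= B * C) as [? [? ?]]
    by (repeat split; apply Rmult_le_pos; lra).
  assert (A * B * C <= A * B /\ A * B * C <= A * C /\ A * B * C <= B * C) as [? [? ?]]
    by (repeat split; nra).
  destruct (classic ((i < j)%nat /\ (j < k)%nat)) as [[? ?]|?].
  - destruct (classic (V i)), (classic (V j)), (classic (V k)); simpl_indic; lra.
  - simpl_indic.
    assert (forall P Q P' x y, 0 <= x -> 0 <= y -> 0 <= indic P * ((indic Q * x) * (indic P' * y)))
      as term_nonneg
      by (intros; pose proof (indic_bounds P); pose proof (indic_bounds Q);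
          pose proof (indic_bounds P'); repeat apply Rmult_le_pos; lra).
    pose proof (term_nonneg (~ V i) (j <> i) (k <> i) A C ltac:(lra) ltac:(lra)).
    pose proof (term_nonneg (~ V j) (i <> j) (k <> j) A B ltac:(lra) ltac:(lra)).
    pose proof (term_nonneg (~ V k) (i <> k) (j <> k) C B ltac:(lra) ltac:(lra)).
    lra.
Qed.

Lemma exp_triangles_restrict_loss d m W (V : nat -> Prop) :
  exp_triangles d m W (fun _ => True) - exp_triangles d m W V
  <= 3 * sumR m (fun i => indic (~ V i) * exp_degree d m W i ^ 2).
Proof.
  set (a := fun x y => indic (y <> x) * edge_prob d W x y).
  set (T := fun i j k => indic (~ V i) * (a i j * a i k)).
  change (sum3 m (fun i j k =>
            indic ((i < j)%nat /\ (j < k)%nat /\ True /\ True /\ True) *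
            (edge_prob d W i j * edge_prob d W j k * edge_prob d W i k))
        - sum3 m (fun i j k =>
            indic ((i < j)%nat /\ (j < k)%nat /\ V i /\ V j /\ V k) *
            (edge_prob d W i j * edge_prob d W j k * edge_prob d W i k))
        <= 3 * sumR m (fun i => indic (~ V i) * sumR m (a i) ^ 2)).
  rewrite <- sum3_minus, <- (sum3_cherries m _ a).
  fold T.
  apply Rle_trans with
    (sum3 m (fun i j k => T i j k + T j i k + T k i j)).
  - apply sum3_le; intros i j k; unfold T, a.
    apply triangle_loss_le; [apply edge_prob_bounds | apply edge_prob_sym].
  - rewrite !sum3_plus, sum3_swap12.
    rewrite <- (sum3_swap23 m (fun i j k => T k i j)), sum3_swap12.
    lra.
Qed.

Lemma dyadic_bucket_exists (y : R) (a : Z) (K : nat) :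
  powerRZ 2 a <= y < powerRZ 2 (a + Z.of_nat K) ->
  exists t, (t < K)%nat /\
    powerRZ 2 (a + Z.of_nat t) <= y < powerRZ 2 (a + Z.of_nat t + 1).
Proof.
  induction K as [|K IH]; intros [Hlo Hhi].
  - rewrite Z.add_0_r in Hhi; lra.
  - destruct (Rlt_or_le y (powerRZ 2 (a + Z.of_nat K))) as [Hy|Hy].
    + destruct (IH (conj Hlo Hy)) as [t [? ?]]; exists t; split; [lia | assumption].
    + exists K; split; [lia|].
      replace (a + Z.of_nat K + 1)%Z with (a + Z.of_nat (S K))%Z by lia.
      split; assumption.
Qed.

Lemma unselected_count_le d m W (r0 : Z) (K : nat) (thr : R) :
  0 <= thr ->
  (forall i, (i < m)%nat ->
     powerRZ 2 r0 <= norm2 d (W i) < powerRZ 2 (r0 + Z.of_nat K)) ->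
  sumR m (fun i =>
    indic (~ exists r, bucket_size d m W r >= thr /\ in_bucket d W r i))
  <= INR K * thr.
Proof.
  intros Hthr Hrange.
  set (sparse_in := fun t i =>
    indic (~ bucket_size d m W (r0 + Z.of_nat t)%Z >= thr) *
    indic (in_bucket d W (r0 + Z.of_nat t)%Z i)).
  assert (sparse_nonneg : forall t i, 0 <= sparse_in t i)
    by (intros; apply Rmult_le_pos; apply indic_bounds).
  apply Rle_trans with (sumR m (fun i => sumR K (fun t => sparse_in t i))).
  - apply sumR_le; intros i Hi.
    destruct (classic (exists r, bucket_size d m W r >= thr /\ in_bucket d W r i))
      as [|Hout].
    + rewrite indic_false by tauto; apply sumR_nonneg; auto.
    + destruct (dyadic_bucket_exists _ _ _ (Hrange i Hi)) as [t [Ht Hb]].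
      apply Rle_trans with (sparse_in t i);
        [| apply (sumR_term_le K (fun t => sparse_in t i)); auto].
      unfold sparse_in; rewrite !indic_true; [lra | exact Hb | |exact Hout].
      intros Hbig; apply Hout; exists (r0 + Z.of_nat t)%Z; split; assumption.
  - rewrite sumR_swap, <- sumR_const; apply sumR_le; intros t _.
    unfold sparse_in; rewrite sumR_mult_l.
    destruct (classic (bucket_size d m W (r0 + Z.of_nat t)%Z >= thr)).
    + rewrite indic_false by tauto; lra.
    + rewrite indic_true by assumption; unfold bucket_size in *; lra.
Qed.

Lemma lg_ge_1 x : 2 <= x -> 1 <= lg x.
Proof.
  intros Hx; unfold lg.
  assert (0 < ln 2) by (rewrite <- ln_1; apply ln_increasing; lra).
  assert (ln 2 <= ln x)
    by (destruct (Req_dec x 2) as [->|]; [lra | apply Rlt_le, ln_increasing; lra]).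
  apply (Rmult_le_reg_r (ln 2)); [assumption|].
  field_simplify; lra.
Qed.

Lemma log2_up_lt_lg n : (2 <= n)%nat -> INR (Nat.log2_up n) < lg (INR n) + 1.
Proof.
  intros Hn.
  destruct (Nat.log2_up_spec n) as [Hlo _]; [lia|].
  pose proof (Nat.log2_up_pos n ltac:(lia)).
  set (L := Nat.log2_up n) in *.
  assert (Hpow : 2 ^ pred L < INR n)
    by (replace 2 with (INR 2) by reflexivity; rewrite <- pow_INR; apply lt_INR; lia).
  assert (0 < ln 2) by (rewrite <- ln_1; apply ln_increasing; lra).
  pose proof (ln_increasing _ _ (pow_lt 2 (pred L) ltac:(lra)) Hpow) as Hln.
  rewrite ln_pow in Hln by lra.
  replace (INR L) with (INR (pred L) + 1) by (rewrite <- S_INR; f_equal; lia).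
  unfold lg; apply Rplus_lt_compat_r.
  apply (Rmult_lt_reg_r (ln 2)); [assumption|].
  field_simplify; lra.
Qed.

Lemma dyadic_bucket_count_le n :
  (2 <= n)%nat -> INR (3 * Nat.log2_up n + 1) <= 7 * lg (INR n).
Proof.
  intros Hn.
  assert (1 <= lg (INR n))
    by (apply lg_ge_1; replace 2 with (INR 2) by reflexivity; apply le_INR; lia).
  pose proof (log2_up_lt_lg n Hn).
  rewrite plus_INR, mult_INR; simpl; lra.
Qed.

Lemma powerRZ_2_opp_nat k : powerRZ 2 (- Z.of_nat k) = / 2 ^ k.
Proof. rewrite powerRZ_neg', <- pow_powerRZ; reflexivity. Qed.

Lemma norm_range_dyadic n x :
  (2 <= n)%nat -> / INR n ^ 2 <= x <= 2 * sqrt (INR n) ->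
  let L := Nat.log2_up n in
  powerRZ 2 (- Z.of_nat (2 * L)) <= x
  < powerRZ 2 (- Z.of_nat (2 * L) + Z.of_nat (3 * L + 1)).
Proof.
  intros Hn [Hlo Hhi]; cbv zeta.
  destruct (Nat.log2_up_spec n) as [_ HnL]; [lia|].
  set (L := Nat.log2_up n) in *.
  assert (HnL' : INR n <= 2 ^ L)
    by (replace 2 with (INR 2) by reflexivity; rewrite <- pow_INR; apply le_INR; lia).
  assert (Hn2 : 2 <= INR n) by (replace 2 with (INR 2) by reflexivity; apply le_INR; lia).
  split.
  - rewrite powerRZ_2_opp_nat, Nat.mul_comm, pow_mult.
    apply Rle_trans with (/ INR n ^ 2); [|assumption].
    apply Rinv_le_contravar; [apply pow_lt; lra | apply pow_incr; lra].
  - replace (- Z.of_nat (2 * L) + Z.of_nat (3 * L + 1))%Z with (Z.of_nat (S L)) by lia.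
    rewrite <- pow_powerRZ; simpl.
    pose proof (sqrt_less (INR n) ltac:(lra) ltac:(lra)).
    lra.
Qed.

Theorem mainTheorem7 (n : nat) (c Delta : R) (d m : nat) (W : nat -> nat -> R) :
  (2 <= n)%nat -> 1 <= c -> 0 < Delta ->
  (m <= n)%nat ->
  (forall i, (i < m)%nat ->
     / (INR n ^ 2) <= norm2 d (W i) <= 2 * sqrt (INR n)) ->
  (forall i, (i < m)%nat -> exp_degree d m W i <= c) ->
  exp_triangles d m W (fun _ => True) >= Delta * INR n / 2 ->
  let Rset := fun r : Z =>
    bucket_size d m W r >= (Delta / (60 * c ^ 2)) * (INR n / lg (INR n)) in
  let V'' := fun i : nat => exists r : Z, Rset r /\ in_bucket d W r i in
  exp_triangles d m W V'' >= Delta * INR n / 8.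
Proof.
  intros Hn Hc HDelta _ Hnorm Hdeg Htri Rset V''.
  set (L := Nat.log2_up n).
  set (thr := (Delta / (60 * c ^ 2)) * (INR n / lg (INR n))).
  set (removed := sumR m (fun i => indic (~ V'' i))).
  assert (Hlg : 1 <= lg (INR n))
    by (apply lg_ge_1; replace 2 with (INR 2) by reflexivity; apply le_INR; lia).
  assert (Hn0 : 0 < INR n) by (apply lt_0_INR; lia).
  assert (Hc2 : 0 < c ^ 2) by nra.
  assert (Hthr0 : 0 <= thr)
    by (apply Rmult_le_pos; apply Rlt_le, Rdiv_lt_0_compat; lra).
  pose proof (exp_triangles_restrict_loss d m W V'') as Hloss.
  assert (Hdeg2 : sumR m (fun i => indic (~ V'' i) * exp_degree d m W i ^ 2)
                  <= c ^ 2 * removed).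
  { apply sumR_weighted_sq_le; intros i Hi.
    split; [apply indic_bounds | split; [apply exp_degree_nonneg | apply Hdeg, Hi]]. }
  assert (Hcount : removed <= INR (3 * L + 1) * thr)
    by exact (unselected_count_le d m W (- Z.of_nat (2 * L)) (3 * L + 1) thr
                Hthr0 (fun i Hi => norm_range_dyadic n _ Hn (Hnorm i Hi))).
  assert (Hbuckets : c ^ 2 * (INR (3 * L + 1) * thr) <= c ^ 2 * (7 * lg (INR n) * thr))
    by (apply Rmult_le_compat_l; [lra|];
        apply Rmult_le_compat_r; [lra | apply dyadic_bucket_count_le, Hn]).
  assert (Hthr : c ^ 2 * (7 * lg (INR n) * thr) = 7 * Delta * INR n / 60)
    by (unfold thr; field; lra).
  assert (c ^ 2 * removed <= c ^ 2 * (INR (3 * L + 1) * thr))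
    by (apply Rmult_le_compat_l; lra).
  assert (0 < Delta * INR n) by (apply Rmult_lt_0_compat; assumption).
  lra.
Qed.
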